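(* There is an absolute constant $K$ such that for all independent real random variables $X,Y,Z$ with bounded ranges and all $n\in\mathbb{N}$, $$H_n(X+Y+Z)\le H_n(X+Z)+H_n(Y+Z)-H_n(Z)+K,$$ $$H_n(X+Y)\le H_n(X+Z)+H_n(Y+Z)-H_n(Z)+K,\qquad H_n(X-Y)\le H_n(X+Z)+H_n(Y+Z)-H_n(Z)+K.$$
   Context: Logarithms base 2. $D_n(x)=\lfloor 2^nx\rfloor/2^n$. For a bounded random variable $W$, $H_n(W):=H(D_n(W))$, the Shannon entropy of $D_n(W)$. *)

From HB Require Import structures.
From mathcomp Require Import all_boot all_order all_algebra.
From mathcomp Require Import all_classical all_reals all_analysis.
Set Implicit Arguments. Unset Strict Implicit. Unset Printing Implicit Defensive.
Import Order.TTheory GRing.Theory Num.Theory.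
Local Open Scope classical_set_scope.
Local Open Scope ring_scope.

Definition log2 {R : realType} (x : R) : R := ln x / ln 2.

Definition Dn {R : realType} (n : nat) (x : R) : R :=
  (Num.floor (2 ^+ n * x))%:~R / 2 ^+ n.

Definition ent_term {R : realType} (p : R) : R :=
  if p == 0 then 0 else - (p * log2 p).

Definition shannon_entropy {d : measure_display} {T : measurableType d}
  {R : realType} (P : probability T R) (V : T -> R) : \bar R :=
  (\esum_(x in [set: R]) (ent_term (fine (P (V @^-1` [set x]))))%:E)%E.

Definition Hn {d : measure_display} {T : measurableType d}
  {R : realType} (P : probability T R) (n : nat) (W : T -> R) : \bar R :=
  shannon_entropy P (fun t => Dn n (W t)).

Definition independent3 {d : measure_display} {T : measurableType d}
  {R : realType} (P : probability T R) (X Y Z : T -> R) : Prop :=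
  forall A B C : set R, measurable A -> measurable B -> measurable C ->
    P (X @^-1` A `&` Y @^-1` B `&` Z @^-1` C)
    = (P (X @^-1` A) * P (Y @^-1` B) * P (Z @^-1` C))%E.

Definition bounded_rv {T : Type} {R : realType} (W : T -> R) : Prop :=
  exists M : R, forall t, `|W t| <= M.

(* All the variables involved are discretized simultaneously: the dyadic floors of X, Y, Z
   and of the five sums and differences are functions on one finite sample space, so every
   H_n is a finite Shannon entropy.  The floor of a sum differs from the sum of the floors by
   a carry taking at most three values, which moves entropies by at most log 3.  The floors of
   X, Y, Z are independent, and the three inequalities then follow from the submodularity of
   entropy, H(A, B) + H(C) <= H(A) + H(B) whenever C is a function of A and of B, applied as
   in Ruzsa's sum-set inequalities.  The carries cost at most 4 bits in total, whence K = 4. *)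

From HB Require Import structures.
From mathcomp Require Import all_boot all_order all_algebra.
From mathcomp Require Import all_classical all_reals all_analysis.
From mathcomp Require Import ring lra zify.
Set Implicit Arguments. Unset Strict Implicit. Unset Printing Implicit Defensive.
Import Order.TTheory GRing.Theory Num.Theory.
Local Open Scope classical_set_scope.
Local Open Scope ring_scope.

Section RealInequalities.
Variable R : realType.

Lemma ln_le_subr1 (x : R) : 0 < x -> ln x <= x - 1.
Proof. by move=> x0; have := @le_ln1Dx R (x - 1); rewrite (addrC 1) subrK; apply; lra. Qed.

Lemma norm_combo_le (a b e M : R) : `|a| <= M -> `|b| <= M -> `|e| <= M ->
  [/\ `|a| <= 3 * M, `|a + b| <= 3 * M, `|a - b| <= 3 * M & `|a + b + e| <= 3 * M].
Proof.
move=> a_le b_le e_le; have := normr_ge0 a; have := ler_normD a b; have := ler_normB a b.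
have := ler_normD (a + b) e; split; lra.
Qed.

Lemma EFin_div_ln2_le (a b z e : R) (k : nat) : e <= a + b - z + k%:R * ln 2 ->
  ((e / ln 2)%:E <= (a / ln 2)%:E + (b / ln 2)%:E - (z / ln 2)%:E + (k%:R)%:E)%E.
Proof.
have ln2_gt0 : 0 < ln 2 :> R by rewrite ln_gt0 // ltr1n.
move=> e_le; rewrite -EFinD lee_fin.
rewrite (_ : _ + k%:R = (a + b - z + k%:R * ln 2) / ln 2); first by rewrite ler_pM2r ?invr_gt0.
by field; rewrite gt_eqF.
Qed.

End RealInequalities.

Section FiniteEntropy.
Variables (R : realType) (J : eqType) (s : seq J) (q : J -> R).
Hypothesis q_ge0 : forall j, 0 <= q j.
Hypothesis q_sum1 : \sum_(j <- s) q j = 1.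

(* A discrete random variable is a function on the outcomes s, weighted by q; entropies are
   in nats. *)
Definition mass (V : eqType) (f : J -> V) (v : V) : R :=
  \sum_(i <- s) q i * (f i == v)%:R.

Definition entropy (V : eqType) (f : J -> V) : R :=
  \sum_(j <- s) q j * - ln (mass f (f j)).

Implicit Types (V W U : eqType).

Lemma mass_ge0 V (f : J -> V) v : 0 <= mass f v.
Proof. by apply: sumr_ge0 => i _; rewrite mulr_ge0. Qed.

Lemma mass_le1 V (f : J -> V) v : mass f v <= 1.
Proof. by rewrite -q_sum1; apply: ler_sum => i _; rewrite ler_piMr //; case: (_ == _). Qed.

Lemma mass_gt0 V (f : J -> V) j : j \in s -> 0 < q j -> 0 < mass f (f j).
Proof.
move=> js qj0; apply: lt_le_trans qj0 _.
rewrite /mass (big_rem j js) /= eqxx mulr1 lerDl.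
by apply: sumr_ge0 => i _; rewrite mulr_ge0.
Qed.

Lemma sum_by_values V (f : J -> V) (r : seq V) (F : J -> R) :
  uniq r -> {in s, forall j, f j \in r} ->
  \sum_(j <- s) F j = \sum_(v <- r) \sum_(j <- s) (f j == v)%:R * F j.
Proof.
move=> ur fr; rewrite exchange_big /= big_seq [RHS]big_seq; apply: eq_bigr => j js.
rewrite (bigD1_seq (f j)) ?fr //= eqxx mul1r big1 ?addr0 // => v.
by rewrite eq_sym => /negbTE ->; rewrite mul0r.
Qed.

Lemma sum_mass V (f : J -> V) (r : seq V) :
  uniq r -> {in s, forall j, f j \in r} -> \sum_(v <- r) mass f v = 1.
Proof.
move=> ur fr; rewrite -q_sum1 (sum_by_values q ur fr).
by apply: eq_bigr => v _; apply: eq_bigr => j _; rewrite mulrC.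
Qed.

Lemma mass_comp V W (f : J -> V) (h : V -> W) (r : seq V) w :
  uniq r -> {in s, forall j, f j \in r} ->
  mass (h \o f) w = \sum_(v <- r) (h v == w)%:R * mass f v.
Proof.
move=> ur fr; rewrite /mass (sum_by_values _ ur fr); apply: eq_bigr => v _.
rewrite mulr_sumr; apply: eq_bigr => j _ /=.
by case: eqP => [->|_] /=; rewrite ?mul0r ?mulr0 ?mul1r ?mulr1 // mulrC.
Qed.

Lemma sum_div_mass_le V (f : J -> V) (r : seq V) (G : V -> R) :
  uniq r -> {in s, forall j, f j \in r} -> (forall v, 0 <= G v) ->
  \sum_(j <- s) q j * G (f j) / mass f (f j) <= \sum_(v <- r) G v.
Proof.
move=> ur fr G0; rewrite (sum_by_values _ ur fr); apply: ler_sum => v _.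
have -> : \sum_(j <- s) (f j == v)%:R * (q j * G (f j) / mass f (f j))
    = G v / mass f v * \sum_(j <- s) q j * (f j == v)%:R.
  rewrite mulr_sumr; apply: eq_bigr => j _.
  by case: eqP => [->|_] /=; rewrite ?mul0r ?mulr0 ?mul1r ?mulr1 // [RHS]mulrC mulrA.
rewrite -/(mass f v); have [->|m0] := eqVneq (mass f v) 0; first by rewrite mulr0.
by rewrite divfK.
Qed.

Lemma entropy_ge0 V (f : J -> V) : 0 <= entropy f.
Proof. by apply: sumr_ge0 => j _; rewrite mulr_ge0 // oppr_ge0 ln_le0 ?mass_le1. Qed.

Lemma entropy_fun_le V W (f : J -> V) (g : J -> W) (h : V -> W) :
  (forall j, g j = h (f j)) -> entropy g <= entropy f.
Proof.
move=> gh; rewrite /entropy !big_seq; apply: ler_sum => j js.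
have [->|qj_neq0] := eqVneq (q j) 0; first by rewrite !mul0r.
have qj_gt0 : 0 < q j by rewrite lt0r qj_neq0 q_ge0.
rewrite ler_wpM2l // lerN2 ler_ln ?posrE ?mass_gt0 //.
apply: ler_sum => i _; rewrite ler_wpM2l // !gh.
by case: eqP => [->|]; rewrite ?eqxx.
Qed.

Lemma entropy_inj V W (f : J -> V) (h : V -> W) :
  injective h -> entropy (h \o f) = entropy f.
Proof.
move=> h_inj; apply: eq_bigr => j _; congr (_ * - ln _).
by apply: eq_bigr => i _ /=; rewrite (inj_eq h_inj).
Qed.

Lemma entropy_by_values V (f : J -> V) (r : seq V) :
  uniq r -> {in s, forall j, f j \in r} ->
  entropy f = \sum_(v <- r) mass f v * - ln (mass f v).
Proof.
move=> ur fr; rewrite /entropy (sum_by_values _ ur fr); apply: eq_bigr => v _.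
have -> : mass f v * - ln (mass f v) = \sum_(j <- s) q j * (f j == v)%:R * - ln (mass f v).
  by rewrite -mulr_suml.
apply: eq_bigr => j _.
by case: eqP => [->|_] /=; rewrite ?mul0r ?mulr0 ?mul0r ?mul1r ?mulr1.
Qed.

Lemma entropy_le_ln_size V (f : J -> V) (r : seq V) :
  uniq r -> {in s, forall j, f j \in r} -> entropy f <= ln (size r)%:R.
Proof.
move=> ur fr; set m : R := (size r)%:R.
have m_gt0 : 0 < m.
  rewrite ltr0n lt0n size_eq0; apply: contra_eq_neq q_sum1 => r0.
  rewrite big_seq big1 ?(eq_sym 0) ?oner_neq0 // => j /fr.
  by rewrite r0 in_nil.
rewrite -subr_le0.
apply: (@le_trans _ _ (\sum_(j <- s) (q j * m^-1 / mass f (f j) - q j))).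
  rewrite /entropy -[X in _ - X]mul1r -q_sum1 mulr_suml -sumrB.
  rewrite big_seq [X in _ <= X]big_seq; apply: ler_sum => j js.
  have [->|qj_neq0] := eqVneq (q j) 0; first by rewrite !mul0r subr0.
  have qj_gt0 : 0 < q j by rewrite lt0r qj_neq0 q_ge0.
  have mj_gt0 := mass_gt0 f js qj_gt0.
  have -> : q j * m^-1 / mass f (f j) - q j = q j * ((mass f (f j) * m)^-1 - 1).
    by rewrite invfM; ring.
  have -> : q j * - ln (mass f (f j)) - q j * ln m = q j * ln ((mass f (f j) * m)^-1).
    by rewrite lnV ?posrE ?mulr_gt0 // lnM ?posrE //; ring.
  by rewrite ler_wpM2l // ln_le_subr1 // invr_gt0 mulr_gt0.
rewrite sumrB q_sum1 subr_le0.
apply: le_trans (sum_div_mass_le (G := fun=> m^-1) ur fr _) _ => [v|].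
  by rewrite invr_ge0 ltW.
have -> : \sum_(v <- r) m^-1 = m * m^-1.
  by rewrite /m -sum1_size natr_sum mulr_suml; apply: eq_bigr => v _; rewrite mul1r.
by rewrite mulfV ?gt_eqF.
Qed.

(* Grouping by the values (a, b) of (f, g), the sum is at most the sum over all pairs with
   w1 a = w2 b of P(f = a) P(g = b) / P(w = w1 a), which is the total mass of f. *)
Lemma sum_mass_ratio_le1 V W U (f : J -> V) (g : J -> W) (w1 : V -> U) (w2 : W -> U) :
  (forall j, w1 (f j) = w2 (g j)) ->
  \sum_(j <- s) q j * (mass f (f j) * mass g (g j)
     / (mass (fun j => (f j, g j)) (f j, g j) * mass (w1 \o f) (w1 (f j)))) <= 1.
Proof.
move=> hw; set fg := fun j => (f j, g j); set w := w1 \o f.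
have w_eq : w2 \o g = w by apply/funext => j; rewrite /w /= hw.
set uf := undup [seq f j | j <- s]; set ug := undup [seq g j | j <- s].
have f_in : {in s, forall j, f j \in uf} by move=> j js; rewrite mem_undup map_f.
have g_in : {in s, forall j, g j \in ug} by move=> j js; rewrite mem_undup map_f.
pose G (p : V * W) := (w1 p.1 == w2 p.2)%:R * mass f p.1 * mass g p.2 / mass w (w1 p.1).
have -> : \sum_(j <- s) q j * (mass f (f j) * mass g (g j)
                                 / (mass fg (fg j) * mass w (w1 (f j))))
    = \sum_(j <- s) q j * G (fg j) / mass fg (fg j).
  by apply: eq_bigr => j _; rewrite /G /= hw eqxx mul1r invfM; ring.
apply: le_trans (sum_div_mass_le (r := [seq (a, b) | a <- uf, b <- ug]) _ _ _) _.
- by rewrite allpairs_uniq ?undup_uniq // => -[? ?] [? ?] _ _ [-> ->].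
- by move=> j js; apply: allpairs_f; [apply: f_in | apply: g_in].
- by move=> p; rewrite /G !mulr_ge0 ?invr_ge0 ?mass_ge0.
rewrite big_allpairs -(sum_mass (undup_uniq _) f_in); apply: ler_sum => a _.
have -> : \sum_(b <- ug) G (a, b) = mass f a / mass w (w1 a) * mass (w2 \o g) (w1 a).
  rewrite (mass_comp _ _ (undup_uniq _) g_in) mulr_sumr.
  by apply: eq_bigr => b _; rewrite /G /= eq_sym; ring.
rewrite w_eq; have [->|mw_neq0] := eqVneq (mass w (w1 a)) 0; first by rewrite mulr0 mass_ge0.
by rewrite divfK.
Qed.

Lemma entropy_submod V W U (f : J -> V) (g : J -> W) (w1 : V -> U) (w2 : W -> U) :
  (forall j, w1 (f j) = w2 (g j)) ->
  entropy (fun j => (f j, g j)) + entropy (w1 \o f) <= entropy f + entropy g.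
Proof.
move=> hw; rewrite -subr_le0; set fg := fun j => (f j, g j); set w := w1 \o f.
pose ratio j := mass f (f j) * mass g (g j) / (mass fg (fg j) * mass w (w j)).
have -> : entropy fg + entropy w - (entropy f + entropy g) = \sum_(j <- s) q j *
    (ln (mass f (f j)) + ln (mass g (g j)) - ln (mass fg (fg j)) - ln (mass w (w j))).
  rewrite /entropy -[X in X - _]big_split -[X in _ - X]big_split -sumrB.
  by apply: eq_bigr => j _ /=; ring.
apply: (@le_trans _ _ (\sum_(j <- s) (q j * ratio j - q j))); last first.
  by rewrite sumrB q_sum1 subr_le0; apply: sum_mass_ratio_le1.
rewrite !big_seq; apply: ler_sum => j js.
have [->|qj_neq0] := eqVneq (q j) 0; first by rewrite !mul0r subr0.
have qj_gt0 : 0 < q j by rewrite lt0r qj_neq0 q_ge0.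
have mf := mass_gt0 f js qj_gt0; have mg := mass_gt0 g js qj_gt0.
have mfg := mass_gt0 fg js qj_gt0; have mw := mass_gt0 w js qj_gt0.
have -> : q j * ratio j - q j = q j * (ratio j - 1) by ring.
rewrite ler_wpM2l //.
have -> : ln (mass f (f j)) + ln (mass g (g j)) - ln (mass fg (fg j)) - ln (mass w (w j))
    = ln (ratio j).
  by rewrite ln_div ?posrE ?mulr_gt0 // !lnM ?posrE //; ring.
by rewrite ln_le_subr1 // divr_gt0 ?mulr_gt0.
Qed.

Lemma entropy_subadd V W (f : J -> V) (g : J -> W) :
  entropy (fun j => (f j, g j)) <= entropy f + entropy g.
Proof.
apply: le_trans (entropy_submod (w1 := fun=> tt) (w2 := fun=> tt) (fun=> erefl)).
by rewrite lerDl entropy_ge0.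
Qed.

Lemma entropy_indep3 V1 V2 V3 (x : J -> V1) (y : J -> V2) (z : J -> V3) :
  {in s, forall j, mass (fun j => (x j, y j, z j)) (x j, y j, z j)
                   = mass x (x j) * mass y (y j) * mass z (z j)} ->
  entropy (fun j => (x j, y j, z j)) = entropy x + entropy y + entropy z.
Proof.
move=> mass_prod; rewrite /entropy -!big_split !big_seq.
apply: eq_bigr => j js /=.
have [->|qj_neq0] := eqVneq (q j) 0; first by rewrite !mul0r !addr0.
have qj_gt0 : 0 < q j by rewrite lt0r qj_neq0 q_ge0.
have mx := mass_gt0 x js qj_gt0; have my := mass_gt0 y js qj_gt0.
have mz := mass_gt0 z js qj_gt0.
by rewrite mass_prod // !lnM ?posrE ?mulr_gt0 //; ring.
Qed.

Lemma entropy_addr_le (V : zmodType) (f g : J -> V) (r : seq V) :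
  uniq r -> {in s, forall j, g j - f j \in r} -> entropy g <= entropy f + ln (size r)%:R.
Proof.
move=> ur diff_in.
apply: le_trans (entropy_fun_le (f := fun j => (f j, g j - f j)) (h := fun p => p.1 + p.2) _) _.
  by move=> j; rewrite /= addrC subrK.
apply: le_trans (entropy_subadd _ _) _; rewrite lerD2l.
exact: entropy_le_ln_size.
Qed.

Section SumsOfIndependent.
Variables (V : zmodType) (x y z : J -> V).
Hypothesis xyz_indep :
  entropy (fun j => (x j, y j, z j)) = entropy x + entropy y + entropy z.

Lemma entropy_sum3_submod :
  entropy (fun j => x j + y j + z j) + entropy z
  <= entropy (fun j => x j + z j) + entropy (fun j => y j + z j).
Proof.
pose u j := (x j, y j + z j); pose v j := (x j + z j, y j).
have uv_sum j : (u j).1 + (u j).2 = (v j).1 + (v j).2 by rewrite /= addrA addrAC.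
have := entropy_submod (w1 := fun p => p.1 + p.2) (w2 := fun p => p.1 + p.2) uv_sum.
have -> : (fun p : V * V => p.1 + p.2) \o u = (fun j => x j + y j + z j).
  by apply/funext => j; rewrite /= addrA.
have h_xyz : entropy (fun j => (x j, y j, z j)) <= entropy (fun j => (u j, v j)).
  by apply: (entropy_fun_le (h := fun p => (p.1.1, p.2.2, p.1.2 - p.2.2))) => j;
    rewrite /= [y j + _]addrC addrK.
have h_u : entropy u <= entropy x + entropy (fun j => y j + z j) := entropy_subadd _ _.
have h_v : entropy v <= entropy (fun j => x j + z j) + entropy y := entropy_subadd _ _.
by move: h_xyz h_u h_v; rewrite xyz_indep; lra.
Qed.

Lemma entropy_sum2_le_sum3 :
  entropy (fun j => x j + y j) <= entropy (fun j => x j + y j + z j).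
Proof.
pose u j := (x j + y j, z j); pose v j := (x j, y j).
have := entropy_submod (f := u) (g := v) (w1 := fst) (w2 := fun p => p.1 + p.2) (fun=> erefl).
have -> : fst \o u = (fun j => x j + y j) by [].
have h_xyz : entropy (fun j => (x j, y j, z j)) <= entropy (fun j => (u j, v j)).
  exact: (entropy_fun_le (h := fun p => (p.2.1, p.2.2, p.1.2))).
have h_u : entropy u <= entropy (fun j => x j + y j + z j) + entropy z.
  apply: le_trans (entropy_subadd (fun j => x j + y j + z j) z).
  by apply: (entropy_fun_le (h := fun p => (p.1 - p.2, p.2))) => j; rewrite /= addrK.
have h_v : entropy v <= entropy x + entropy y := entropy_subadd _ _.
by move: h_xyz h_u h_v; rewrite xyz_indep; lra.
Qed.

Lemma entropy_diff_submod :
  entropy (fun j => x j - y j) + entropy z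
  <= entropy (fun j => x j + z j) + entropy (fun j => y j + z j).
Proof.
pose u j := (x j + z j, y j + z j); pose v j := (x j, y j).
have uv_diff j : (u j).1 - (u j).2 = (v j).1 - (v j).2 by rewrite /= [y j + _]addrC addrKA.
have := entropy_submod (w1 := fun p => p.1 - p.2) (w2 := fun p => p.1 - p.2) uv_diff.
have -> : (fun p : V * V => p.1 - p.2) \o u = (fun j => x j - y j).
  by apply/funext => j; rewrite /= [y j + _]addrC addrKA.
have h_xyz : entropy (fun j => (x j, y j, z j)) <= entropy (fun j => (u j, v j)).
  by apply: (entropy_fun_le (h := fun p => (p.2.1, p.2.2, p.1.1 - p.2.1))) => j;
    rewrite /= [x j + _]addrC addrK.
have h_u : entropy u <= entropy (fun j => x j + z j) + entropy (fun j => y j + z j).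
  exact: entropy_subadd.
have h_v : entropy v <= entropy x + entropy y := entropy_subadd _ _.
by move: h_xyz h_u h_v; rewrite xyz_indep; lra.
Qed.

End SumsOfIndependent.

End FiniteEntropy.

Lemma ent_termE (R : realType) (p : R) : ent_term p = p * - ln p / ln 2.
Proof. by rewrite /ent_term /log2; case: eqP => [->|_]; rewrite ?mul0r //; ring. Qed.

Section ObservationWeights.
Variables (d : measure_display) (T : measurableType d) (R : realType).
Variables (P : probability T R) (J : eqType) (obs : T -> J) (s : seq J).
Hypothesis s_uniq : uniq s.
Hypothesis obs_in : forall t, obs t \in s.
Hypothesis obs_measurable : forall j, measurable (obs @^-1` [set j]).

Definition obs_prob (j : J) : R := fine (P (obs @^-1` [set j])).

Lemma preimage_pred_cons (p : pred J) x (s' : seq J) :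
  obs @^-1` [set j | p j && (j \in x :: s')] =
  (if p x then obs @^-1` [set x] else set0) `|` obs @^-1` [set j | p j && (j \in s')].
Proof.
apply/seteqP; split => t /=; rewrite in_cons.
  by case/andP => pt /orP[/eqP <-|ts]; [left; rewrite pt | right; rewrite pt ts].
case=> [|/andP[-> ->]]; last by rewrite orbT.
by case: ifP => // px ->; rewrite px eqxx.
Qed.

Lemma preimage_pred_nil (p : pred J) :
  obs @^-1` [set j | p j && (j \in ([::] : seq J))] = set0.
Proof. by apply/seteqP; split => t //=; rewrite andbF. Qed.

Lemma measurable_preimage_pred (p : pred J) (s' : seq J) :
  measurable (obs @^-1` [set j | p j && (j \in s')]).
Proof.
elim: s' => [|x s' ih]; first by rewrite preimage_pred_nil.
by rewrite preimage_pred_cons; apply: measurableU => //; case: ifP.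
Qed.

Lemma prob_preimage_pred_seq (p : pred J) (s' : seq J) : uniq s' ->
  fine (P (obs @^-1` [set j | p j && (j \in s')])) = \sum_(i <- s') obs_prob i * (p i)%:R.
Proof.
elim: s' => [|x s' ih]; first by rewrite preimage_pred_nil measure0 big_nil.
case/andP => xs' us'; have mx : measurable (if p x then obs @^-1` [set x] else set0).
  by case: ifP.
rewrite preimage_pred_cons big_cons measureU //; last 2 first.
- exact: measurable_preimage_pred.
- apply/seteqP; split => t //= []; case: ifP => _ //= -> /andP[_].
  by rewrite (negbTE xs').
rewrite fineD ?fin_num_measure ?ih //; last exact: measurable_preimage_pred.
by case: ifP => px; rewrite /obs_prob ?measure0 ?mulr1 ?mulr0.
Qed.

Lemma mass_obs_prob (V : eqType) (f : J -> V) (v : V) :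
  mass s obs_prob f v = fine (P (obs @^-1` [set j | f j == v])).
Proof.
rewrite /mass -prob_preimage_pred_seq //; congr (fine (P _)).
by apply/seteqP; split => t /= => [/andP[] // | ->]; rewrite obs_in.
Qed.

Lemma obs_prob_ge0 j : 0 <= obs_prob j.
Proof. by rewrite fine_ge0. Qed.

Lemma obs_prob_sum1 : \sum_(j <- s) obs_prob j = 1.
Proof.
have := mass_obs_prob (fun=> tt) tt; rewrite /mass (_ : _ @^-1` _ = setT); last first.
  by apply/seteqP; split.
by rewrite probability_setT /=; under eq_bigr do rewrite mulr1.
Qed.

Lemma shannon_entropy_obs (V : T -> R) (g : J -> R) : (forall t, V t = g (obs t)) ->
  shannon_entropy P V = (entropy s obs_prob g / ln 2)%:E.
Proof.
move=> hV; rewrite /shannon_entropy.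
have level_prob x : fine (P (V @^-1` [set x])) = mass s obs_prob g x.
  rewrite mass_obs_prob; congr (fine (P _)).
  by apply/seteqP; split => t; rewrite /= hV; [move=> -> | move/eqP].
under eq_esum do rewrite level_prob.
set u := undup [seq g j | j <- s].
have g_in : {in s, forall j, g j \in u} by move=> j js; rewrite mem_undup map_f.
have -> : (\esum_(x in [set: R]) (ent_term (mass s obs_prob g x))%:E)%E =
          (\esum_(x in [set` u]) (ent_term (mass s obs_prob g x))%:E)%E.
  rewrite [RHS]esum_mkcond; apply: eq_esum => x _; case: ifP => // /negbT.
  rewrite mem_setE => xu; rewrite /ent_term (_ : mass _ _ _ _ = 0) ?eqxx //.
  rewrite /mass big_seq big1 // => j js; case: eqP => [gjx|_]; last by rewrite mulr0.
  by move: xu; rewrite -gjx g_in.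
rewrite esum_fset; last 2 first.
- exact: finite_seq.
- move=> x _; rewrite lee_fin ent_termE divr_ge0 ?mulr_ge0 ?oppr_ge0 ?ln_le0 ?ln_ge0 ?ler1n //.
    exact: (mass_ge0 _ obs_prob_ge0).
  exact: (mass_le1 obs_prob_ge0 obs_prob_sum1).
rewrite -(fsbig_seq _ _ (undup_uniq _)) sumEFin.
rewrite (entropy_by_values obs_prob (undup_uniq _) g_in) mulr_suml.
by congr (_%:E); apply: eq_bigr => x _; rewrite ent_termE.
Qed.

End ObservationWeights.

Section DyadicFloor.
Variable R : realType.

Lemma floorD_carry (u v : R) :
  Num.floor (u + v) - (Num.floor u + Num.floor v) \in [:: 0; 1].
Proof.
have := floor_itv u; have := floor_itv v; have := floor_itv (u + v).
rewrite !intrD => /andP[a1 a2] /andP[b1 b2] /andP[c1 c2].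
set e := _ - _; have : (-1)%:~R < e%:~R :> R /\ e%:~R < 2%:~R :> R.
  by rewrite /e !intrB !intrD; split; lra.
by rewrite !ltr_int !inE => -[]; lia.
Qed.

Lemma floorD3_carry (u v w : R) :
  Num.floor (u + v + w) - (Num.floor u + Num.floor v + Num.floor w) \in [:: 0; 1; 2].
Proof.
have := floor_itv u; have := floor_itv v; have := floor_itv w; have := floor_itv (u + v + w).
rewrite !intrD => /andP[a1 a2] /andP[b1 b2] /andP[c1 c2] /andP[d1 d2].
set e := _ - _; have : (-1)%:~R < e%:~R :> R /\ e%:~R < 3%:~R :> R.
  by rewrite /e !intrB !intrD; split; lra.
by rewrite !ltr_int !inE => -[]; lia.
Qed.

Lemma floorB_carry (u v : R) :
  Num.floor (u - v) - (Num.floor u - Num.floor v) \in [:: -1; 0].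
Proof.
have := floor_itv u; have := floor_itv v; have := floor_itv (u - v).
rewrite !intrD => /andP[a1 a2] /andP[b1 b2] /andP[c1 c2].
set e := _ - _; have : (-2)%:~R < e%:~R :> R /\ e%:~R < 1%:~R :> R.
  by rewrite /e !intrB; split; lra.
by rewrite !ltr_int !inE => -[]; lia.
Qed.

Lemma measurable_floor_level (c : R) (a : int) :
  0 < c -> measurable [set r : R | Num.floor (c * r) = a].
Proof.
move=> c_gt0; rewrite (_ : [set r | _] = [set` `[a%:~R / c, (a + 1)%:~R / c[%R]).
  exact: measurable_itv.
apply/seteqP; split => r /=; rewrite in_itv /= ler_pdivrMr // ltr_pdivlMr // ![r * c]mulrC.
  by move=> <-; rewrite floor_itv.
by move=> h; apply/eqP; rewrite floor_eq.
Qed.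

Definition int_range (N : nat) : seq int := [seq i%:Z - N%:Z | i <- iota 0 (2 * N + 1)].

Lemma floor_in_int_range (x : R) (N : nat) : `|x| <= N%:R -> Num.floor x \in int_range N.
Proof.
move=> x_le; have := floor_itv x => /andP[fl_le lt_fl].
have : - (N%:Z) - 1 < Num.floor x /\ Num.floor x <= N%:Z.
  rewrite -(ltr_int R) -(ler_int R) intrB intrN; move: x_le lt_fl; rewrite intrD ler_norml.
  by case/andP; split; lra.
case=> lo hi; apply/mapP; exists (absz (Num.floor x + N%:Z)); last by lia.
by rewrite mem_iota /= add0n; lia.
Qed.

End DyadicFloor.

Section Discretization.
Variables (R : realType) (d : measure_display) (T : measurableType d).
Variables (P : probability T R) (X Y Z : T -> R) (n : nat) (M : R).
Hypotheses (mX : measurable_fun setT X) (mY : measurable_fun setT Y).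
Hypotheses (mZ : measurable_fun setT Z) (XYZ_indep : independent3 P X Y Z).
Hypotheses (X_le : forall t, `|X t| <= M) (Y_le : forall t, `|Y t| <= M).
Hypothesis Z_le : forall t, `|Z t| <= M.

Let c : R := 2 ^+ n.
Let c_gt0 : 0 < c. Proof. exact: exprn_gt0. Qed.
Let level (a : int) := [set r : R | Num.floor (c * r) = a].
Let fl (W : T -> R) t := Num.floor (c * W t).

Let XZ t := X t + Z t.
Let YZ t := Y t + Z t.
Let XYZ t := X t + Y t + Z t.
Let XY t := X t + Y t.
Let XmY t := X t - Y t.

Let JT := (int * int * int * int * int * int * int * int)%type.
Let obs t : JT := (fl X t, fl Y t, fl Z t, fl XZ t, fl YZ t, fl XYZ t, fl XY t, fl XmY t).

Let fX (j : JT) := j.1.1.1.1.1.1.1.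
Let fY (j : JT) := j.1.1.1.1.1.1.2.
Let fZ (j : JT) := j.1.1.1.1.1.2.
Let fXZ (j : JT) := j.1.1.1.1.2.
Let fYZ (j : JT) := j.1.1.1.2.
Let fXYZ (j : JT) := j.1.1.2.
Let fXY (j : JT) := j.1.2.
Let fXmY (j : JT) := j.2.

Let measurable_level (W : T -> R) a : measurable_fun setT W -> measurable (W @^-1` level a).
Proof.
by move=> mW; rewrite -[_ @^-1` _]setTI; apply: mW => //; exact: measurable_floor_level.
Qed.

Let obs_measurable j : measurable (obs @^-1` [set j]).
Proof.
have mXZ : measurable_fun setT XZ := measurable_realfun.measurable_funD mX mZ.
have mYZ : measurable_fun setT YZ := measurable_realfun.measurable_funD mY mZ.
have mXY : measurable_fun setT XY := measurable_realfun.measurable_funD mX mY.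
have mXYZ : measurable_fun setT XYZ := measurable_realfun.measurable_funD mXY mZ.
have mXmY : measurable_fun setT XmY := measurable_realfun.measurable_funB mX mY.
case: j => [[[[[[[a1 a2] a3] a4] a5] a6] a7] a8].
rewrite (_ : obs @^-1` _ =
  X @^-1` level a1 `&` Y @^-1` level a2 `&` Z @^-1` level a3 `&` XZ @^-1` level a4 `&`
  YZ @^-1` level a5 `&` XYZ @^-1` level a6 `&` XY @^-1` level a7 `&` XmY @^-1` level a8).
  by repeat apply: measurableI; apply: measurable_level.
apply/seteqP; split => t /=; first by case.
by case=> [[[[[[[h1 h2] h3] h4] h5] h6] h7] h8]; rewrite /obs /fl h1 h2 h3 h4 h5 h6 h7 h8.
Qed.

Let N : nat := Num.bound (c * (3 * M)).
Let Ir := int_range N.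
Let prodIr (U : eqType) (A : seq U) : seq (U * int) := [seq (a, b) | a <- A, b <- Ir].
(* Only realized outcomes are kept, so that carries can be checked pointwise. *)
Let s : seq JT :=
  [seq j <- undup (prodIr (prodIr (prodIr (prodIr (prodIr (prodIr (prodIr Ir)))))))
     | `[< exists t, obs t = j >]].

Let s_uniq : uniq s. Proof. by rewrite filter_uniq // undup_uniq. Qed.

Let obs_in t : obs t \in s.
Proof.
have M_ge0 : 0 <= M := le_trans (normr_ge0 _) (X_le t).
have fl_in W : `|W t| <= 3 * M -> fl W t \in Ir.
  move=> W_le; apply: floor_in_int_range; apply: ltW; apply: le_lt_trans (archi_boundP _).
    by rewrite normrM gtr0_norm // ler_pM2l.
  by rewrite !mulr_ge0 // ltW.
rewrite mem_filter mem_undup; apply/andP; split; first by apply/asboolP; exists t.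
have [X3 XY3 XmY3 XYZ3] := norm_combo_le (X_le t) (Y_le t) (Z_le t).
have [Y3 YZ3 _ _] := norm_combo_le (Y_le t) (Z_le t) (Z_le t).
have [Z3 _ _ _] := norm_combo_le (Z_le t) (Z_le t) (Z_le t).
have [_ XZ3 _ _] := norm_combo_le (X_le t) (Z_le t) (Z_le t).
by repeat apply: allpairs_f; apply: fl_in.
Qed.

Let observed j : j \in s -> exists t, obs t = j.
Proof. by rewrite mem_filter => /andP[/asboolP]. Qed.

Let q := obs_prob P obs.
Let q_ge0 : forall j, 0 <= q j := obs_prob_ge0 P obs.
Let q_sum1 : \sum_(j <- s) q j = 1 := obs_prob_sum1 P s_uniq obs_in obs_measurable.
Let H (V : eqType) (f : JT -> V) := entropy s q f.

Let Hn_obs (p : JT -> int) (W : T -> R) : (forall t, p (obs t) = fl W t) ->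
  Hn P n W = (H p / ln 2)%:E.
Proof.
move=> pW; rewrite /Hn (shannon_entropy_obs P s_uniq obs_in obs_measurable
  (g := fun j => (p j)%:~R / c)); last by move=> t; rewrite /Dn pW.
rewrite /H (entropy_inj s q p (h := fun k : int => k%:~R / c)) //.
by move=> a b /(mulIf (invr_neq0 (lt0r_neq0 c_gt0))) /intr_inj.
Qed.

Let mass_level (p : JT -> int) (W : T -> R) a : (forall t, p (obs t) = fl W t) ->
  mass s q p a = fine (P (W @^-1` level a)).
Proof.
move=> pW; rewrite (mass_obs_prob P s_uniq obs_in obs_measurable); congr (fine (P _)).
by apply/seteqP; split => t /=; rewrite pW => /eqP.
Qed.

Let floors_indep : H (fun j => (fX j, fY j, fZ j)) = H fX + H fY + H fZ.
Proof.
apply: (entropy_indep3 q_ge0) => j _.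
rewrite (mass_level (p := fX) (W := X)) // (mass_level (p := fY) (W := Y)) //.
rewrite (mass_level (p := fZ) (W := Z)) //.
rewrite (mass_obs_prob P s_uniq obs_in obs_measurable).
rewrite (_ : obs @^-1` _ = X @^-1` level (fX j) `&` Y @^-1` level (fY j) `&` Z @^-1` level (fZ j)).
  rewrite XYZ_indep; try exact: measurable_floor_level.
  have fin_level (W : T -> R) a : measurable_fun setT W -> P (W @^-1` level a) \is a fin_num.
    by move=> mW; apply/fin_num_measure/measurable_level.
  by rewrite !fineM ?fin_numM ?fin_level.
apply/seteqP; split => t /=; rewrite !xpair_eqE.
  by case/andP => /andP[/eqP <- /eqP <-] /eqP <-.
by case=> [[<- <-] <-]; rewrite !eqxx.
Qed.

Let carry_XZ : H (fun j => fX j + fZ j) <= H fXZ + ln 2.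
Proof.
apply: (entropy_addr_le q_ge0 q_sum1 (r := [:: 0; -1])) => // j /observed [t <-].
have := floorD_carry (c * X t) (c * Z t).
by rewrite /fX /fZ /fXZ /= /fl /XZ mulrDr -opprB !inE => /orP[] /eqP ->.
Qed.

Let carry_YZ : H (fun j => fY j + fZ j) <= H fYZ + ln 2.
Proof.
apply: (entropy_addr_le q_ge0 q_sum1 (r := [:: 0; -1])) => // j /observed [t <-].
have := floorD_carry (c * Y t) (c * Z t).
by rewrite /fY /fZ /fYZ /= /fl /YZ mulrDr -opprB !inE => /orP[] /eqP ->.
Qed.

Let carry_XYZ : H fXYZ <= H (fun j => fX j + fY j + fZ j) + ln 3.
Proof.
apply: (entropy_addr_le q_ge0 q_sum1 (r := [:: 0; 1; 2])) => // j /observed [t <-].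
by have := floorD3_carry (c * X t) (c * Y t) (c * Z t); rewrite -!mulrDr.
Qed.

Let carry_XY : H fXY <= H (fun j => fX j + fY j) + ln 2.
Proof.
apply: (entropy_addr_le q_ge0 q_sum1 (r := [:: 0; 1])) => // j /observed [t <-].
by have := floorD_carry (c * X t) (c * Y t); rewrite -mulrDr.
Qed.

Let carry_XmY : H fXmY <= H (fun j => fX j - fY j) + ln 2.
Proof.
apply: (entropy_addr_le q_ge0 q_sum1 (r := [:: -1; 0])) => // j /observed [t <-].
by have := floorB_carry (c * X t) (c * Y t); rewrite -mulrBr.
Qed.

Lemma discretized_entropy_le :
  let RHS := (Hn P n (fun t => (X t + Z t)%R) + Hn P n (fun t => (Y t + Z t)%R)
              - Hn P n Z + (4%:R)%:E)%E in
  [/\ (Hn P n (fun t => (X t + Y t + Z t)%R) <= RHS)%E,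
      (Hn P n (fun t => (X t + Y t)%R) <= RHS)%E &
      (Hn P n (fun t => (X t - Y t)%R) <= RHS)%E].
Proof.
rewrite /= (Hn_obs (p := fXZ) (W := XZ)) // (Hn_obs (p := fYZ) (W := YZ)) //.
rewrite (Hn_obs (p := fZ) (W := Z)) // (Hn_obs (p := fXYZ) (W := XYZ)) //.
rewrite (Hn_obs (p := fXY) (W := XY)) // (Hn_obs (p := fXmY) (W := XmY)) //.
have ln2_gt0 : 0 < ln 2 :> R by rewrite ln_gt0 // ltr1n.
have ln3_le : ln 3 <= 2 * ln 2 :> R.
  by rewrite mulr_natl -lnXn // ler_ln ?posrE ?exprn_gt0 // expr2 -natrM ler_nat.
have := entropy_sum3_submod q_ge0 q_sum1 floors_indep.
have := entropy_sum2_le_sum3 q_ge0 q_sum1 floors_indep.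
have := entropy_diff_submod q_ge0 q_sum1 floors_indep.
move: carry_XZ carry_YZ carry_XYZ carry_XY carry_XmY; rewrite /H.
by split; apply: EFin_div_ln2_le; lra.
Qed.

End Discretization.

Lemma bounded_rv3 (T : Type) (R : realType) (X Y Z : T -> R) :
  bounded_rv X -> bounded_rv Y -> bounded_rv Z ->
  exists M, [/\ forall t, `|X t| <= M, forall t, `|Y t| <= M & forall t, `|Z t| <= M].
Proof.
move=> [a Xa] [b Yb] [e Ze]; exists (`|a| + `|b| + `|e|).
have := ler_norm a; have := ler_norm b; have := ler_norm e.
have := normr_ge0 a; have := normr_ge0 b; have := normr_ge0 e.
by split=> t; [move: (Xa t) | move: (Yb t) | move: (Ze t)]; lra.
Qed.

Theorem mainTheorem9 :
  exists K : nat,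
  forall (R : realType) (d : measure_display) (T : measurableType d)
         (P : probability T R) (X Y Z : T -> R) (n : nat),
    measurable_fun setT X -> measurable_fun setT Y -> measurable_fun setT Z ->
    independent3 P X Y Z ->
    bounded_rv X -> bounded_rv Y -> bounded_rv Z ->
    let RHS := (Hn P n (fun t => (X t + Z t)%R) + Hn P n (fun t => (Y t + Z t)%R)
                - Hn P n Z + (K%:R)%:E)%E in
    [/\ (Hn P n (fun t => (X t + Y t + Z t)%R) <= RHS)%E,
        (Hn P n (fun t => (X t + Y t)%R) <= RHS)%E &
        (Hn P n (fun t => (X t - Y t)%R) <= RHS)%E].
Proof.
exists 4%N => R d T P X Y Z n mX mY mZ XYZ_indep bX bY bZ.
have [M [X_le Y_le Z_le]] := bounded_rv3 bX bY bZ.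
exact: (discretized_entropy_le n mX mY mZ XYZ_indep X_le Y_le Z_le).
Qed.
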